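(* Let $G=(U,V,E)$ be a finite bipartite graph, $F\subseteq E$, and let $(E_r,E_b)$ be an $(A,B,C)$-free bipartition of the set $E_c$ of committed edges of $G$. Let $G-F=(U,V,E\setminus F)$. Then there are no alternating cycles of $E_r$ relative to $G-F$.
   Context: $\hat{E}=\{uv: u\in U,\ v\in V,\ uv\notin E\}$. Two edges $u_1v_1,u_2v_2\in E$ ($u_i\in U$, $v_i\in V$) are in conflict in $G$ if $u_1v_2\notin E$ and $u_2v_1\notin E$. An edge is committed if it is in conflict with some other edge of $E$. A bipartition of $E_c$ is a pair $(E_r,E_b)$ with $E_r\cap E_b=\emptyset$, $E_r\cup E_b=E_c$, $F\cap E_c\subseteq E_b$. It is $(A,B,C)$-free if there are no $u_1,u_2\in U$, $v_1,v_2\in V$ forming: $(A_1)$: $u_1v_1,u_2v_2\in E_r$, $u_1v_2,u_2v_1\in\hat{E}$; $(A_2)$: $u_1v_1,u_2v_2\in E_b$, $u_1v_2,u_2v_1\in\hat{E}$; $(B_1)$: $u_1v_1,u_2v_2\in E_r$, $u_1v_2\in\hat{E}$, $u_2v_1\in E_b$; $(B_2)$: $u_1v_1,u_2v_2\in E_b$, $u_1v_2\in\hat{E}$, $u_2v_1\in E_r$; $(C)$: $u_1v_1,u_2v_2\in E_r$, $u_1v_2\in\hat{E}$, $u_2v_1\in F$. For a bipartite graph $H=(U,V,E_H)$, $M\subseteq E_H$ and $k\ge2$, an alternating cycle of $M$ relative to $H$ is a set of $k$ distinct vertices $u_0,\dots,u_{k-1}\in U$ and $k$ distinct vertices $v_0,\dots,v_{k-1}\in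 V$ with $u_iv_i\notin E_H$ and $u_{i+1}v_i\in M$ for all $0\le i<k$ (indices modulo $k$). *)

From mathcomp Require Import all_boot.
Set Implicit Arguments. Unset Strict Implicit. Unset Printing Implicit Defensive.

(* A finite bipartite graph G = (U, V, E) is given by two finTypes U, V
   (the two vertex classes) and an edge set E : {set U * V}. *)

Section Defs.
Variables U V : finType.

Definition in_conflict (E : {set U * V}) (e1 e2 : U * V) : bool :=
  [&& e1 \in E, e2 \in E, (e1.1, e2.2) \notin E & (e2.1, e1.2) \notin E].

Definition committed (E : {set U * V}) : {set U * V} :=
  [set e in E | [exists e', in_conflict E e e']].

Definition is_bipartition (E F Er Eb : {set U * V}) : Prop :=
  [/\ Er :&: Eb = set0, Er :|: Eb = committed E & F :&: committed E \subset Eb].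

Definition ABC_free (E F Er Eb : {set U * V}) : Prop :=
  forall (u1 u2 : U) (v1 v2 : V),
    ~ ( [/\ (u1, v1) \in Er, (u2, v2) \in Er,
                       (u1, v2) \notin E & (u2, v1) \notin E] \/
          [/\ (u1, v1) \in Eb, (u2, v2) \in Eb,
                       (u1, v2) \notin E & (u2, v1) \notin E] \/
          [/\ (u1, v1) \in Er, (u2, v2) \in Er,
                       (u1, v2) \notin E & (u2, v1) \in Eb] \/
          [/\ (u1, v1) \in Eb, (u2, v2) \in Eb,
                       (u1, v2) \notin E & (u2, v1) \in Er] \/
          [/\ (u1, v1) \in Er, (u2, v2) \in Er,
                       (u1, v2) \notin E & (u2, v1) \in F]).

Definition alternating_cycle (EH M : {set U * V}) : Prop :=
  exists (k : nat) (us : 'I_k -> U) (vs : 'I_k -> V),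
    [/\ 2 <= k, injective us, injective vs &
        forall i : 'I_k, (us i, vs i) \notin EH /\ (us (ordS i), vs i) \in M].

End Defs.

From mathcomp Require Import all_boot.
Set Implicit Arguments. Unset Strict Implicit. Unset Printing Implicit Defensive.

(* Take a shortest alternating cycle and read it cyclically as the pairs
   (u_i, v_i).  A chord u_j v_i that is not an edge of G - F could replace a
   whole arc of pairs, and a red chord could replace an arc of links; either
   way a shorter cycle arises, so in a shortest cycle every chord is a
   non-red edge of G - F.  The (A,B,C)-freeness yields the key "red square"
   property: if u1v1 and u2v2 are red and u1v2, u2v1 are edges of G, one of
   them is red.  With at least four pairs, this applied to the links u1v0 and
   u3v2 contradicts minimality; cycles of length two and three are excluded
   by the configurations A1, C and B2. *)

Lemma next_enum_ord k (i : 'I_k) : next (enum 'I_k) i = ordS i.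
Proof.
apply/val_inj; rewrite next_nth mem_enum inE index_enum_ord /=.
case Ek: (enum 'I_k) => [|y p]; first by have := mem_enum 'I_k i; rewrite Ek.
have -> : nth y p i = nth y (enum 'I_k) i.+1 by rewrite Ek.
case: (ltnP i.+1 k) => [lt_ik | ge_ik].
  by rewrite nth_enum_ord // modn_small.
have -> : i.+1 = k by apply/eqP; rewrite eqn_leq ge_ik ltn_ord.
rewrite modnn nth_default ?size_enum_ord //.
rewrite -[y]/(nth y (y :: p) 0) -Ek nth_enum_ord //.
exact: leq_ltn_trans (ltn_ord i).
Qed.

Section AlternatingSeq.
Variables (U V : finType) (H M : {set U * V}).

(* A cycle u_0 v_0, ..., u_(k-1) v_(k-1) is the sequence of pairs (u_i, v_i);
   consecutive pairs p, q are linked by the edge (q.1, p.2) = u_(i+1) v_i. *)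
Definition alt_step (p q : U * V) := (q.1, p.2) \in M.

Definition alt_seq (s : seq (U * V)) :=
  all (fun p => p \notin H) s && cycle alt_step s.

Lemma alt_seq_rot n s : alt_seq (rot n s) = alt_seq s.
Proof.
by rewrite /alt_seq rot_cycle (perm_all _ (_ : perm_eq (rot n s) s)) // perm_rot.
Qed.

Lemma alt_seq_next x y s : alt_seq [:: x, y & s] -> alt_step y (head x s).
Proof. by case/andP=> _ /andP[_]; case: s => [|z s] /= /andP[]. Qed.

Lemma alt_seq_skip x a s :
  alt_step x (head x s) -> alt_seq (x :: a ++ s) -> alt_seq (x :: s).
Proof.
move=> xs /andP[/= /andP[xH]]; rewrite all_cat => /andP[_ Hs].
rewrite rcons_path cat_path last_cat => /andP[/andP[_ ps] ex].
rewrite /alt_seq /= xH Hs rcons_path.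
by case: s xs ps ex {Hs} => [|y s] /= -> // /andP[_ ->].
Qed.

Lemma alt_seq_merge x a y s :
  (x.1, y.2) \notin H -> alt_seq (x :: a ++ y :: s) -> alt_seq ((x.1, y.2) :: s).
Proof.
move=> xyH /andP[/= /andP[_]]; rewrite all_cat /= => /and3P[_ _ Hs].
rewrite rcons_path cat_path last_cat /= => /andP[/and3P[_ _ ys] ex].
rewrite /alt_seq /= xyH Hs rcons_path.
by case: s {Hs} ys ex => //= z s; rewrite /alt_step /= => /andP[-> ->].
Qed.

Lemma alternating_cycle_seq :
  alternating_cycle H M -> exists2 s, s != [::] & alt_seq s.
Proof.
case=> k [us [vs [k_ge2 _ _ usvs]]].
exists [seq (us i, vs i) | i <- enum 'I_k].
  by rewrite -size_eq0 size_map size_enum_ord -lt0n (leq_trans _ k_ge2).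
apply/andP; split; first by apply/allP=> _ /mapP[i _ ->]; case: (usvs i).
rewrite cycle_map; apply: (cycle_from_next (enum_uniq _)) => i _.
by rewrite next_enum_ord; case: (usvs i).
Qed.

End AlternatingSeq.

Section ABCFreeBipartition.
Variables (U V : finType) (E F Er Eb : {set U * V}).
Hypotheses (sFE : F \subset E) (bip : is_bipartition E F Er Eb)
  (free : ABC_free E F Er Eb).

Lemma in_conflict_committed e f : in_conflict E e f -> e \in committed E.
Proof.
by move=> ef; rewrite inE; case/and4P: (ef) => -> *; apply/existsP; exists f.
Qed.

Lemma in_conflict_sym e f : in_conflict E e f -> in_conflict E f e.
Proof. by case/and4P=> *; apply/and4P. Qed.

Lemma committed_in_E e : e \in committed E -> e \in E.
Proof. by rewrite inE => /andP[]. Qed.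

Lemma committed_red_or_blue e : e \in committed E -> (e \in Er) || (e \in Eb).
Proof. by case: bip => _ <- _; rewrite inE. Qed.

Lemma red_committed e : e \in Er -> e \in committed E.
Proof. by case: bip => _ <- _; rewrite inE => ->. Qed.

Lemma blue_committed e : e \in Eb -> e \in committed E.
Proof. by case: bip => _ <- _; rewrite inE orbC => ->. Qed.

Lemma red_notin_blue e : e \in Er -> e \notin Eb.
Proof.
by move=> eR; apply/negP=> eB; case: bip => /setP/(_ e); rewrite !inE eR eB.
Qed.

Lemma red_notin_F e : e \in Er -> e \notin F.
Proof.
move=> eR; apply/negP=> eF; apply/negP: (red_notin_blue eR); apply/negPn.
by case: bip => _ _ /subsetP; apply; rewrite inE eF red_committed.
Qed.

Lemma red_in_E e : e \in Er -> e \in E.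
Proof. by move/red_committed/committed_in_E. Qed.

Lemma red_in_EdiffF e : e \in Er -> e \in E :\: F.
Proof. by move=> eR; rewrite inE red_notin_F ?red_in_E. Qed.

Lemma conflict_red_blue e f : in_conflict E e f -> f \in Er -> e \in Eb.
Proof.
move=> ef fR; case/orP: (committed_red_or_blue (in_conflict_committed ef)) => // eR.
case: e f ef eR fR => [u1 v1] [u2 v2] /and4P[_ _ n12 n21] eR fR.
by case: (@free u1 u2 v1 v2); left; split.
Qed.

Lemma conflict_blue_red e f : in_conflict E e f -> f \in Eb -> e \in Er.
Proof.
move=> ef fB; case/orP: (committed_red_or_blue (in_conflict_committed ef)) => // eB.
case: e f ef eB fB => [u1 v1] [u2 v2] /and4P[_ _ n12 n21] eB fB.
by case: (@free u1 u2 v1 v2); right; left; split.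
Qed.

Lemma red_partner e : e \in Er -> exists2 f, in_conflict E e f & f \in Eb.
Proof.
move=> eR; have := red_committed eR; rewrite inE => /andP[_ /existsP[f ef]].
by exists f => //; apply: conflict_red_blue (in_conflict_sym ef) eR.
Qed.

Lemma red_pair_cross u1 u2 v1 v2 :
  (u1, v1) \in Er -> (u2, v2) \in Er -> (u1, v2) \notin E -> (u2, v1) \in E :\: F.
Proof.
move=> R11 R22 n12; rewrite inE; apply/andP; split.
  by apply/negP=> F21; case: (@free u1 u2 v1 v2); do 4 right; split.
by apply/negPn/negP=> n21; case: (@free u1 u2 v1 v2); left; split.
Qed.

Lemma red_square_half u1 u2 v1 w x y :
  (u1, v1) \in Er -> in_conflict E (u1, v1) (x, y) -> (x, y) \in Eb ->
  (u2, y) \in Er -> (u1, w) \in Eb -> (u2, w) \notin E -> (u2, v1) \in E ->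
  (u2, v1) \in Er.
Proof.
move=> R11 c1 xyB R2y B1w n2w E21; case/and4P: (c1) => _ xyE n1y nx1.
have E1w := committed_in_E (blue_committed B1w).
have Exw : (x, w) \in E.
  apply/negPn/negP=> nxw; have c : in_conflict E (u1, w) (x, y) by apply/and4P.
  by move: (red_notin_blue (conflict_blue_red c xyB)); rewrite B1w.
have c2 : in_conflict E (u2, v1) (x, w) by apply/and4P.
case/orP: (committed_red_or_blue (in_conflict_committed c2)) => // B21.
by case: (@free u1 u2 v1 y); do 2 right; left; split.
Qed.

Lemma red_square u1 u2 v1 v2 :
  (u1, v1) \in Er -> (u2, v2) \in Er -> (u1, v2) \in E -> (u2, v1) \in E ->
  ((u1, v2) \in Er) || ((u2, v1) \in Er).
Proof.
move=> R11 R22 E12 E21; apply/norP=> -[n12 n21].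
have [[x y] c1 xyB] := red_partner R11; have [[z w] c2 zwB] := red_partner R22.
case/and4P: (c1) => _ xyE n1y nx1; case/and4P: (c2) => _ zwE n2w nz2.
have E1w : (u1, w) \in E.
  apply/negPn/negP=> n1w; have c : in_conflict E (u1, v2) (z, w) by apply/and4P.
  by move: n12; rewrite (conflict_blue_red c zwB).
have E2y : (u2, y) \in E.
  apply/negPn/negP=> n2y; have c : in_conflict E (u2, v1) (x, y) by apply/and4P.
  by move: n21; rewrite (conflict_blue_red c xyB).
have c : in_conflict E (u1, w) (u2, y) by apply/and4P.
case/orP: (committed_red_or_blue (in_conflict_committed (in_conflict_sym c))).
  move=> R2y; move: n21.
  by rewrite (red_square_half R11 c1 xyB R2y (conflict_red_blue c R2y) n2w E21).
move=> B2y; have R1w := conflict_blue_red c B2y; move: n12.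
have B1w := conflict_red_blue (in_conflict_sym c) R1w.
by rewrite (red_square_half R22 c2 zwB R1w B1w n1y E12).
Qed.

Lemma red_cross_of_F a1 a2 b1 b2 :
  (a1, b1) \in Er -> (a2, b2) \in Er -> (a2, b1) \in F -> (a1, b2) \in Er.
Proof.
move=> R11 R22 F21.
have E12 : (a1, b2) \in E.
  by apply/negPn/negP=> n12; move: (red_pair_cross R11 R22 n12); rewrite inE F21.
have /orP[//|R21] := red_square R11 R22 E12 (subsetP sFE _ F21).
by move: (red_notin_F R21); rewrite F21.
Qed.

Local Notation alt := (alt_seq (E :\: F) Er).

Definition minimal_alt (s : seq (U * V)) :=
  alt s /\ forall s', s' != [::] -> size s' < size s -> ~~ alt s'.

Lemma minimal_alt_rot n s : minimal_alt s -> minimal_alt (rot n s).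
Proof. by case=> alt_s min_s; split; rewrite ?alt_seq_rot ?size_rot. Qed.

Lemma minimal_alt_notin_E x y s : minimal_alt [:: x, y & s] -> y \notin E.
Proof.
case=> alt_s min_s; apply/negP=> yE.
case/andP: (alt_s) => /and3P[_ yH _] /andP[xy _].
have yF : y \in F by move: yH; rewrite inE yE andbT negbK.
move/negP: (min_s (x :: s) isT (ltnSn _)); apply.
apply: (alt_seq_skip (a := [:: y])) (alt_s).
move: (alt_seq_next alt_s); case: (head x s) => uq vq.
case: x y xy yF {yE yH alt_s min_s} => [u0 v0] [u1 v1] xy yF yq.
exact: red_cross_of_F yq xy yF.
Qed.

Lemma minimal_alt_chord x y s :
  s != [::] -> minimal_alt [:: x, y & s] ->
  (x.1, y.2) \in E :\: F /\ (x.1, y.2) \notin Er.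
Proof.
move=> s0 [alt_s min_s]; split.
  apply/negPn/negP=> xyH.
  move/negP: (min_s ((x.1, y.2) :: s) isT (ltnSn _)); apply.
  exact: (alt_seq_merge (a := [::]) xyH alt_s).
apply/negP=> xyR; have lt2 : size [:: y; x] < size [:: x, y & s].
  by rewrite /= !ltnS lt0n size_eq0.
move/negP: (min_s [:: y; x] isT lt2); apply; apply: (alt_seq_skip (a := s)) => //.
by rewrite cats1 -rcons_cons -rot1_cons alt_seq_rot.
Qed.

Lemma minimal_alt_far_chord p0 p1 p2 p3 t :
  minimal_alt [:: p0, p1, p2, p3 & t] ->
  (p3.1, p0.2) \in E :\: F /\ (p3.1, p0.2) \notin Er.
Proof.
case=> alt_s min_s; split.
  apply/negPn/negP=> nH.
  move/negP: (min_s [:: (p3.1, p0.2); p1; p2] isT isT); apply.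
  apply: (alt_seq_merge (a := t) nH).
  by rewrite -(alt_seq_rot _ _ 3) in alt_s.
apply/negP=> R; move/negP: (min_s [:: p0, p3 & t] isT (leqW (ltnSn _))); apply.
exact: (alt_seq_skip (a := [:: p1; p2])) alt_s.
Qed.

Lemma minimal_alt_pair x y : ~ minimal_alt [:: x; y].
Proof.
move=> min_s; have yE := minimal_alt_notin_E min_s.
case: min_s => /andP[/and3P[xH _ _] /and3P[xy yx _]] _.
case: x y xy yx xH yE => [u0 v0] [u1 v1] xy yx xH yE.
by move: xH; rewrite (red_pair_cross xy yx yE).
Qed.

Lemma minimal_alt_triangle p0 p1 p2 : ~ minimal_alt [:: p0; p1; p2].
Proof.
move=> min_s.
have n1 := minimal_alt_notin_E min_s.
have n2 := minimal_alt_notin_E (minimal_alt_rot 1 min_s).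
have n0 := minimal_alt_notin_E (minimal_alt_rot 2 min_s).
have [d0 _] := minimal_alt_chord (s := [:: p2]) isT min_s.
have [d1 _] := minimal_alt_chord (s := [:: p0]) isT (minimal_alt_rot 1 min_s).
case: min_s => /andP[_ /and4P[r0 r1 r2 _]] _.
case: p0 p1 p2 n0 n1 n2 d0 d1 r0 r1 r2 => [u0 v0] [u1 v1] [u2 v2] /= n0 n1 n2.
rewrite /alt_step /= !inE => /andP[_ d0] /andP[_ d1] r0 r1 r2.
have B0 : (u0, v1) \in Eb.
  by apply: (conflict_red_blue _ r0); apply/and4P; split=> //; apply: red_in_E.
have B1 : (u1, v2) \in Eb.
  by apply: (conflict_red_blue _ r1); apply/and4P; split=> //; apply: red_in_E.
by case: (@free u1 u0 v2 v1); do 3 right; left; split.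
Qed.

Lemma minimal_alt_long p0 p1 p2 p3 t : ~ minimal_alt [:: p0, p1, p2, p3 & t].
Proof.
move=> min_s.
have [/setDP[d _] nRd] :=
  minimal_alt_chord (s := p3 :: t ++ [:: p0]) isT (minimal_alt_rot 1 min_s).
have [/setDP[f _] nRf] := minimal_alt_far_chord min_s.
case: min_s => /andP[_ /= /and4P[r0 _ r2 _]] _.
by case/orP: (red_square r0 r2 d f) => R; [move: nRd | move: nRf]; rewrite R.
Qed.

Lemma minimal_alt_nil s : minimal_alt s -> s = [::].
Proof.
case: s => [// | x [| y [| z [| w t]]]] min_s; exfalso.
- case: min_s => /andP[/andP[xH _] /andP[xx _]] _.
  by case: x xH xx => u v xH /red_in_EdiffF; rewrite (negPf xH).
- exact: minimal_alt_pair min_s.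
- exact: minimal_alt_triangle min_s.
- exact: minimal_alt_long min_s.
Qed.

Lemma alt_seq_nil s : alt s -> s = [::].
Proof.
have [n] := ubnP (size s); elim: n s => // n IHn s lt_sn alt_s.
apply: minimal_alt_nil; split=> // s' s'0 lt_s's; apply/negP=> alt_s'.
by move: s'0; rewrite (IHn s' (leq_trans lt_s's lt_sn) alt_s').
Qed.

End ABCFreeBipartition.

Theorem lemma6 (U V : finType) (E F Er Eb : {set U * V}) :
  F \subset E ->
  is_bipartition E F Er Eb ->
  ABC_free E F Er Eb ->
  ~ alternating_cycle (E :\: F) Er.
Proof.
move=> sFE bip free /alternating_cycle_seq[s s0 alt_s].
by move: s0; rewrite (alt_seq_nil sFE bip free alt_s).
Qed.
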